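(* Let $n \geqslant 19$ be an integer, and let $T_n$ be the Transposition graph, i.e. the Cayley graph $\mathrm{Cay}(\mathrm{Sym}_n, T)$ where $T$ is the set of all transpositions of $\mathrm{Sym}_n$. Then every integer $m$ with $-\frac{n-4}{2} \leqslant m \leqslant \frac{n-4}{2}$ is an eigenvalue of (the adjacency matrix of) $T_n$.
   Context: $\mathrm{Sym}_n$ is the symmetric group on $n$ letters. The Cayley graph $\mathrm{Cay}(G,S)$ has vertex set $G$, with $g$ adjacent to $gs$ for $s\in S$. The spectrum of $T_n$ is the set of eigenvalues of its adjacency matrix. *)

From mathcomp Require Import all_boot all_order all_algebra all_fingroup all_field.
Set Implicit Arguments. Unset Strict Implicit. Unset Printing Implicit Defensive.
Import GRing.Theory Num.Theory.
Local Open Scope ring_scope.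

Definition transpositions (n : nat) : {set {perm 'I_n}} :=
  [set s | [exists x : 'I_n, exists y : 'I_n, (x != y) && (s == tperm x y)]].

Definition transp_adj (n : nat) (g h : {perm 'I_n}) : bool :=
  [exists s in transpositions n, h == (g * s)%g].

Definition transp_adjmx (n : nat) : 'M[algC]_(#|{perm 'I_n}|) :=
  \matrix_(i, j) (transp_adj (enum_val i) (enum_val j))%:R.

From mathcomp Require Import all_boot all_order all_algebra all_fingroup all_field.
From mathcomp Require Import zify.
Set Implicit Arguments. Unset Strict Implicit. Unset Printing Implicit Defensive.
Import GRing.Theory Num.Theory.
Local Open Scope ring_scope.

(* Let the cells of a Young diagram of size n be numbered 0, ..., n-1, with row
   and column stabilizers R and C in Sym_n. The coefficient of g in the Young
   symmetrizer, e(g) = sum_(q in C) sgn(q) [g q^-1 in R], is an eigenfunction of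
   right multiplication by the sum of all transpositions: that sum is central, so
   the defect of the eigen-equation is left R-invariant and right C-sign-equivariant,
   and by von Neumann's lemma such a function vanishes as soon as it vanishes at 1.
   Evaluating at 1 with e(a b) = [a, b in the same row] - [a, b in the same column]
   gives the content sum_cells (col - row) as eigenvalue; the transposed diagram
   gives its opposite. Diagrams made of at most three hooks, in Frobenius
   coordinates, have every content k with 2|k| + 4 <= n once n >= 19. *)

Lemma tperm_eq_pair (T : finType) (a b x y : T) :
  a != b -> tperm a b = tperm x y -> (a, b) = (x, y) \/ (a, b) = (y, x).
Proof.
move=> ab /(congr1 (fun s : {perm T} => s a)); rewrite tpermL.
by case: tpermP => [->->|->->|_ _ ba]; [left|right|move: ab; rewrite ba eqxx].
Qed.

Section Transpositions.
Variable n : nat.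

Lemma transpositionsP (s : {perm 'I_n}) :
  reflect (exists a b, a != b /\ s = tperm a b) (s \in transpositions n).
Proof.
rewrite inE; apply: (iffP existsP) => [[a /existsP[b /andP[ab /eqP->]]]|[a [b [ab ->]]]].
  by exists a, b.
by exists a; apply/existsP; exists b; rewrite ab eqxx.
Qed.

Lemma tperm_transpositions (a b : 'I_n) : a != b -> tperm a b \in transpositions n.
Proof. by move=> ab; apply/transpositionsP; exists a, b. Qed.

Lemma transpositionsJ (s g : {perm 'I_n}) :
  ((s ^ g)%g \in transpositions n) = (s \in transpositions n).
Proof.
suff imp t h : t \in transpositions n -> (t ^ h)%g \in transpositions n.
  by apply/idP/idP => [/(imp _ g^-1%g)|/imp//]; rewrite conjgK.
case/transpositionsP=> a [b [ab ->]]; rewrite tpermJ.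
by apply: tperm_transpositions; rewrite (inj_eq perm_inj).
Qed.

Lemma transpositionsV (s : {perm 'I_n}) :
  (s^-1%g \in transpositions n) = (s \in transpositions n).
Proof.
suff imp t : t \in transpositions n -> t^-1%g \in transpositions n.
  by apply/idP/idP => [/imp|/imp//]; rewrite invgK.
by case/transpositionsP=> a [b [ab ->]]; rewrite tpermV tperm_transpositions.
Qed.

Lemma transp_adjE (g h : {perm 'I_n}) :
  transp_adj g h = ((h^-1 * g)%g \in transpositions n).
Proof.
rewrite -transpositionsV invMg invgK.
apply/existsP/idP => [[s /andP[sT /eqP->]]|hT]; first by rewrite mulKg.
by exists (g^-1 * h)%g; rewrite hT mulKVg eqxx.
Qed.

(* [eigenvalue] is about row eigenvectors [v *m A = c *: v]; an eigenfunction of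
   right multiplication by transpositions, read as a row vector, is one. *)
Lemma eigenvalue_transp_adjmx (F : {perm 'I_n} -> algC) (c : algC) :
  (forall g, \sum_(s in transpositions n) F (g * s)%g = c * F g) ->
  (exists g, F g != 0) -> eigenvalue (transp_adjmx n) c.
Proof.
move=> eigF [g0 Fg0]; apply/eigenvalueP; exists (\row_i F (enum_val i)); last first.
  by apply: contraNneq Fg0 => /rowP/(_ (enum_rank g0)); rewrite !mxE enum_rankK => ->.
apply/rowP => j; rewrite !mxE -eigF.
under eq_bigr => i _ do rewrite !mxE transp_adjE.
rewrite -(big_enum_val (fun g => F g * ((_ * g)%g \in _)%:R)) /=.
rewrite (reindex_inj (mulgI (enum_val j))) [RHS]big_mkcond; apply: eq_big => // s _.
by rewrite mulKg; case: (s \in _); rewrite ?mulr1 ?mulr0.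
Qed.

Lemma sum_tperm_pairs (G : {perm 'I_n} -> algC) :
  \sum_(ab : 'I_n * 'I_n | ab.1 != ab.2) G (tperm ab.1 ab.2) =
  2%:R * \sum_(s in transpositions n) G s.
Proof.
rewrite (partition_big (fun ab => tperm ab.1 ab.2) (mem (transpositions n))) /=;
  last by move=> ab; apply: tperm_transpositions.
rewrite mulr_sumr; apply: eq_bigr => _ /transpositionsP[x [y [xy ->]]].
rewrite (eq_bigr (fun _ => G (tperm x y))); last by move=> ab /andP[_ /eqP->].
rewrite sumr_const mulr_natl; congr (_ *+ _).
rewrite (eq_card (B := pred2 (x, y) (y, x))) ?card2 ?xpair_eqE ?(negbTE xy) //.
case=> a b; rewrite !inE /=; apply/andP/orP => [[ab /eqP/(tperm_eq_pair ab)]|].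
  by case=> ->; [left|right].
case=> /eqP[-> ->]; first by rewrite xy eqxx.
by rewrite eq_sym xy tpermC eqxx.
Qed.

End Transpositions.

(** * Young symmetrizer eigenfunctions *)

Section PermStabilizer.
Variables (T : finType) (U : eqType) (f : T -> U).

Definition perm_stab : {set {perm T}} := [set p : {perm T} | [forall x, f (p x) == f x]].

Lemma perm_stabP (p : {perm T}) : reflect (forall x, f (p x) = f x) (p \in perm_stab).
Proof. by rewrite inE; apply: (iffP forallP) => fp x; apply/eqP. Qed.

Lemma group_set_perm_stab : group_set perm_stab.
Proof.
apply/group_setP; split; first by apply/perm_stabP => x; rewrite perm1.
move=> p q /perm_stabP fp /perm_stabP fq; apply/perm_stabP => x.
by rewrite permM fq fp.
Qed.

Canonical perm_stab_group := group group_set_perm_stab.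

Lemma tperm_perm_stab (a b : T) : (tperm a b \in perm_stab) = (f a == f b).
Proof.
apply/perm_stabP/eqP => [fab|fab x]; first by rewrite -[in LHS]fab tpermL.
by case: tpermP => [->|->|].
Qed.

End PermStabilizer.

Section SameRowPairs.
Variables (n : nat) (r c : 'I_n -> nat).
Hypothesis r_c_inj : forall x y, r x = r y -> c x = c y -> x = y.
Hypothesis row_left_closed : forall x j, (j <= c x)%N -> exists y, r y = r x /\ c y = j.

Lemma card_left_in_row a : #|[pred b | (r b == r a) && (c b < c a)%N]| = c a.
Proof.
rewrite -(size_image c) -[RHS](size_iota 0); apply/perm_size/uniq_perm => [||j].
- rewrite map_inj_in_uniq ?enum_uniq // => x y; rewrite !mem_enum !inE.
  by case/andP=> /eqP rx _ /andP[/eqP ry _] cxy; apply: r_c_inj; rewrite ?rx ?ry.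
- exact: iota_uniq.
- rewrite mem_iota add0n; apply/imageP/idP => [[b /andP[_ cb] ->] //|ja].
  have [b [rb cb]] := row_left_closed (ltnW ja).
  by exists b; rewrite ?inE ?rb ?cb ?eqxx.
Qed.

Lemma sum_same_row_pairs :
  (\sum_(ab : 'I_n * 'I_n | ab.1 != ab.2) (r ab.1 == r ab.2) = 2 * \sum_a c a)%N.
Proof.
have sum_left a : (\sum_b ((r b == r a) && (c b < c a)) = c a)%N.
  rewrite -[RHS]card_left_in_row -sum1_card [RHS]big_mkcond.
  by apply: eq_bigr => b _; rewrite inE; case: (_ && _).
rewrite big_mkcond (eq_bigr (fun ab =>
    ((r ab.2 == r ab.1) && (c ab.2 < c ab.1)) + ((r ab.1 == r ab.2) && (c ab.1 < c ab.2))))%N.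
  rewrite big_split -(pair_bigA _ (fun a b => ((r b == r a) && (c b < c a)%N : nat))).
  rewrite -(pair_bigA _ (fun a b => ((r a == r b) && (c a < c b)%N : nat))) /=.
  by rewrite [X in (_ + X)%N]exchange_big addnn -mul2n; under eq_bigr do rewrite sum_left.
case=> a b _ /=; have [->|ab] := eqVneq a b; first by rewrite ltnn andbF.
rewrite [r b == _]eq_sym; case: eqVneq => //= rab.
by case: ltngtP => // cab; case/eqP: ab; apply: r_c_inj.
Qed.

End SameRowPairs.

Section YoungDiagram.
Variables (n : nat) (row col : 'I_n -> nat).
Hypothesis row_col_inj : forall x y, row x = row y -> col x = col y -> x = y.
Hypothesis diagram_down_closed : forall x i j, (i <= row x)%N -> (j <= col x)%N ->
  exists y, row y = i /\ col y = j.

Definition row_cols (r : nat) := [seq col y | y in [pred y | row y == r]].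

Lemma row_colsP r c : reflect (exists y, row y = r /\ col y = c) (c \in row_cols r).
Proof.
apply: (iffP imageP) => [[y /eqP ry ->]|[y [ry <-]]]; first by exists y.
by exists y; rewrite ?inE ?ry.
Qed.

Section RowSeparating.
Variable h : {perm 'I_n}.
Hypothesis h_row_sep : forall x y, row x = row y -> col (h x) = col (h y) -> x = y.

Lemma row_cols_covered r :
  (forall x, row x = r -> col (h x) \in row_cols r) ->
  {subset row_cols r <= [seq col (h x) | x in [pred x | row x == r]]}.
Proof.
move=> into; set hcols := [seq col (h x) | x in _].
have hcols_uniq : uniq hcols.
  rewrite map_inj_in_uniq ?enum_uniq // => x y; rewrite !mem_enum !inE.
  by move=> /eqP rx /eqP ry; apply: h_row_sep; rewrite rx ry.
have hcols_sub : {subset hcols <= row_cols r}.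
  by move=> c /imageP[x]; rewrite inE => /eqP rx ->; apply: into.
have [|_ eq_cols] := uniq_min_size hcols_uniq hcols_sub; first by rewrite !size_image.
by move=> c; rewrite eq_cols.
Qed.

(* Take a lowest row [i] where this fails, at [x0], and let [c] be the column of
   [h x0]: every cell of column [c] lies above row [i], and each of their rows
   contains a preimage under [h] of column [c]; together with [x0] this gives
   more preimages of column [c] than it has cells. *)
Lemma col_perm_in_row_cols x : col (h x) \in row_cols (row x).
Proof.
suff: forall i x, row x = i -> col (h x) \in row_cols i by apply.
clear x; elim/ltn_ind => i IH x0 rx0; apply: contraT => c_notin.
set c := col (h x0) in c_notin.
pose Ycol := [pred y | col y == c].
have Ycol_above y : y \in Ycol -> (row y < i)%N.
  rewrite inE => /eqP cy; rewrite ltnNge; apply: contra c_notin => ile.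
  have [z [rz cz]] := diagram_down_closed ile (leqnn (col y)).
  by apply/row_colsP; exists z; rewrite rz cz.
have Ycol_hit y : y \in Ycol -> row y \in [seq row (h^-1 z)%g | z in Ycol].
  move=> Yy; have into := IH _ (Ycol_above y Yy).
  have /imageP[x] : col y \in [seq col (h x) | x in [pred x | row x == row y]].
    by apply: (row_cols_covered into); apply/row_colsP; exists y.
  rewrite inE => /eqP rx cxy; apply/imageP; exists (h x); last by rewrite permK.
  by move: Yy; rewrite !inE cxy.
have: uniq (i :: [seq row y | y in Ycol]).
  rewrite /= map_inj_in_uniq ?enum_uniq ?andbT.
    by apply/imageP => -[y Yy ry]; have := Ycol_above y Yy; rewrite -ry ltnn.
  move=> y1 y2; rewrite !mem_enum !inE => /eqP c1 /eqP c2 r12.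
  by apply: row_col_inj; rewrite ?c1 ?c2.
move/uniq_leq_size => /(_ [seq row (h^-1 z)%g | z in Ycol]).
rewrite /= !size_image ltnn; apply => y; rewrite inE => /orP[/eqP->|/imageP[z Yz ->]].
  by rewrite -rx0; apply/imageP; exists (h x0); rewrite ?inE ?permK.
exact: Ycol_hit.
Qed.

Lemma perm_row_sep_in_stab_mul : h \in (perm_stab row * perm_stab col)%g.
Proof.
pose phi x := iinv (col_perm_in_row_cols x).
have phi_row x : row (phi x) = row x by apply/eqP; have := mem_iinv (col_perm_in_row_cols x).
have phi_col x : col (phi x) = col (h x) by apply: f_iinv.
have phi_inj : injective phi.
  move=> x y e; apply: h_row_sep; first by rewrite -phi_row e phi_row.
  by rewrite -!phi_col e.
pose p := perm phi_inj.
rewrite -[h](mulKVg p); apply: mem_mulg; apply/perm_stabP => x; first by rewrite permE.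
by rewrite permM -phi_col -(permE phi_inj) -/p permKV.
Qed.

End RowSeparating.

Local Notation R := (perm_stab row).
Local Notation C := (perm_stab col).

Lemma stab_row_col_eq1 p : p \in R -> p \in C -> p = 1%g.
Proof.
move=> /perm_stabP pR /perm_stabP pC; apply/permP => x; rewrite perm1.
by apply: row_col_inj.
Qed.

Definition young_fun (g : {perm 'I_n}) : algC :=
  \sum_(q in C) (-1) ^+ odd_perm q * ((g * q^-1)%g \in R)%:R.

Lemma young_funM p g q : p \in R -> q \in C ->
  young_fun (p * g * q)%g = (-1) ^+ odd_perm q * young_fun g.
Proof.
move=> pR qC; rewrite /young_fun (reindex_inj (mulIg q)) /= mulr_sumr.
apply: eq_big => [q'|q' _]; first by rewrite groupMr.
rewrite odd_permM signr_addb invMg !mulgA mulgK -mulgA groupMl //.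
by rewrite mulrAC mulrC.
Qed.

Lemma young_fun1 : young_fun 1 = 1.
Proof.
rewrite /young_fun (bigD1 1%g) ?group1 //= invg1 mulg1 group1 odd_perm1 mulr1.
rewrite big1 ?addr0 // => q /andP[qC q_neq1]; rewrite mul1g.
case qR: (q^-1%g \in R); last by rewrite mulr0.
by move: q_neq1; rewrite -[q]invgK (stab_row_col_eq1 qR (groupVr qC)) invg1 eqxx.
Qed.

Lemma young_fun_stab_mul p q : p \in R -> q \in C ->
  young_fun (p * q)%g = (-1) ^+ odd_perm q.
Proof. by move=> pR qC; rewrite -[p]mulg1 young_funM // young_fun1 mulr1. Qed.

Lemma young_fun_tperm_mixed a b : row a != row b -> col a != col b ->
  young_fun (tperm a b) = 0.
Proof.
move=> rab cab; rewrite /young_fun big1 // => q qC.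
case rR: (_ \in R); last by rewrite mulr0.
set r := (tperm a b * q^-1)%g in rR; have tE : tperm a b = (r * q)%g by rewrite mulgKV.
move/perm_stabP: rR => rR; move/perm_stabP: qC => qC.
have r_fix z : z != a -> z != b -> r z = z.
  move=> za zb; have qrz : q (r z) = z by rewrite -permM -tE tpermD // eq_sym.
  apply: row_col_inj; first exact: rR.
  by rewrite -{2}qrz qC.
have ra : r a = a.
  have [//|ra_a] := eqVneq (r a) a; have [ra_b|ra_b] := eqVneq (r a) b.
    by move: rab; rewrite -ra_b rR eqxx.
  by apply: (@perm_inj _ r); apply: r_fix.
have qa : q a = b by rewrite -ra -permM -tE tpermL.
by move: cab; rewrite -qa qC eqxx.
Qed.

Lemma young_fun_tperm a b : a != b ->
  young_fun (tperm a b) = (row a == row b)%:R - (col a == col b)%:R.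
Proof.
move=> ab; have [rab|rab] := eqVneq (row a) (row b).
  have -> : col a == col b = false by apply: contraNF ab => /eqP/(row_col_inj rab)->.
  by rewrite -[tperm a b]mulg1 young_fun_stab_mul ?group1 ?odd_perm1 ?tperm_perm_stab ?rab ?subr0.
have [cab|cab] := eqVneq (col a) (col b); last by rewrite young_fun_tperm_mixed ?subrr.
rewrite -[tperm a b]mul1g young_fun_stab_mul ?group1 ?tperm_perm_stab ?cab //.
by rewrite odd_tperm ab sub0r expr1.
Qed.

(* von Neumann's lemma: either [g] is in [R * C], or it maps two cells [x], [y] of
   a row into one column, and then [(x y) * g = g * (g x g y)] forces [F g = - F g]. *)
Lemma stab_sign_equivariant_eq0 (F : {perm 'I_n} -> algC) :
  (forall p g q, p \in R -> q \in C -> F (p * g * q)%g = (-1) ^+ odd_perm q * F g) ->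
  F 1%g = 0 -> forall g, F g = 0.
Proof.
move=> Feq F1 g.
case: (boolP [exists x, exists y, [&& x != y, row x == row y & col (g x) == col (g y)]]).
  case/existsP=> x /existsP[y /and3P[xy /eqP rxy /eqP cxy]].
  have tgE : (tperm x y * g = g * tperm (g x) (g y))%g by rewrite conjgC tpermJ.
  have tR : tperm x y \in R by rewrite tperm_perm_stab rxy.
  have tC : tperm (g x) (g y) \in C by rewrite tperm_perm_stab cxy.
  have e1 := Feq _ g _ tR (group1 _); have e2 := Feq _ g _ (group1 _) tC.
  rewrite mulg1 odd_perm1 mul1r tgE in e1.
  rewrite mul1g e1 odd_tperm (inj_eq perm_inj) xy expr1 mulN1r in e2.
  by move/eqP: e2; rewrite -addr_eq0 -mulr2n mulrn_eq0 /= => /eqP.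
move=> no_pair; have /mulsgP[p q pR qC ->] : g \in (R * C)%g.
  apply: perm_row_sep_in_stab_mul => x y rxy cxy; apply/eqP; apply: contraNT no_pair => xy.
  by apply/existsP; exists x; apply/existsP; exists y; rewrite xy rxy cxy !eqxx.
by rewrite -[p]mulg1 Feq // F1 mulr0.
Qed.

Definition young_content : algC := \sum_(s in transpositions n) young_fun s.

Lemma young_fun_eigen g :
  \sum_(s in transpositions n) young_fun (g * s)%g = young_content * young_fun g.
Proof.
apply/eqP; rewrite -subr_eq0; apply/eqP; move: g.
apply: stab_sign_equivariant_eq0 => [p g q pR qC|]; last first.
  by rewrite young_fun1 mulr1; under eq_bigr do rewrite mul1g; rewrite subrr.
rewrite mulrBr young_funM // mulrCA; congr (_ - _).
rewrite mulr_sumr (reindex_inj (conjg_inj q)); apply: eq_big => [s|s _] /=.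
  by rewrite transpositionsJ.
by rewrite -mulgA -conjgC !mulgA -(mulgA p) young_funM.
Qed.

Lemma eigenvalue_young_content : eigenvalue (transp_adjmx n) young_content.
Proof.
apply: (eigenvalue_transp_adjmx young_fun_eigen).
by exists 1%g; rewrite young_fun1 oner_neq0.
Qed.

Lemma young_contentE : young_content = (\sum_a col a)%:R - (\sum_a row a)%:R.
Proof.
apply: (@mulfI _ 2%:R); first by rewrite pnatr_eq0.
rewrite /young_content -sum_tperm_pairs (eq_bigr (fun ab =>
    (row ab.1 == row ab.2)%:R - (col ab.1 == col ab.2)%:R)); last first.
  by move=> ab; apply: young_fun_tperm.
have row_pairs :
    (\sum_(ab : 'I_n * 'I_n | ab.1 != ab.2) (row ab.1 == row ab.2) = 2 * \sum_a col a)%N.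
  by apply: sum_same_row_pairs => // x j jx; apply: diagram_down_closed.
have col_pairs :
    (\sum_(ab : 'I_n * 'I_n | ab.1 != ab.2) (col ab.1 == col ab.2) = 2 * \sum_a row a)%N.
  apply: sum_same_row_pairs => [x y cxy rxy|x j jx]; first exact: row_col_inj.
  by have [y [ry cy]] := diagram_down_closed jx (leqnn (col x)); exists y.
by rewrite sumrB -!natr_sum row_pairs col_pairs mulrBr -!natrM.
Qed.

End YoungDiagram.

Lemma eigenvalue_diagram_content n (row col : 'I_n -> nat) :
  (forall x y, row x = row y -> col x = col y -> x = y) ->
  (forall x i j, (i <= row x)%N -> (j <= col x)%N -> exists y, row y = i /\ col y = j) ->
  eigenvalue (transp_adjmx n) ((\sum_a col a)%:R - (\sum_a row a)%:R).
Proof. by move=> inj down; rewrite -young_contentE //; apply: eigenvalue_young_content. Qed.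

Definition down_closed (D : seq (nat * nat)) := forall r c r' c',
  (r, c) \in D -> (r' <= r)%N -> (c' <= c)%N -> (r', c') \in D.

Definition content (D : seq (nat * nat)) : int := \sum_(p <- D) (p.2%:Z - p.1%:Z).

(* Cells of [D] are indexed by their position in [D]; the rows and columns
   can be exchanged, which turns the content into its opposite. *)
Lemma eigenvalue_content (D : seq (nat * nat)) : uniq D -> down_closed D ->
  eigenvalue (transp_adjmx (size D)) (content D)%:~R /\
  eigenvalue (transp_adjmx (size D)) (- content D)%:~R.
Proof.
move=> D_uniq D_down.
pose row (x : 'I_(size D)) := (nth (0, 0)%N D x).1.
pose col (x : 'I_(size D)) := (nth (0, 0)%N D x).2.
have cell_inj x y : row x = row y -> col x = col y -> x = y.
  move=> rxy cxy; apply/val_inj/eqP; rewrite -(nth_uniq (0, 0)%N (ltn_ord x) (ltn_ord y) D_uniq).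
  by move: rxy cxy; rewrite /row /col; case: (nth _ _ x) => ? ?; case: (nth _ _ y) => ? ? /= -> ->.
have cell_down x i j : (i <= row x)%N -> (j <= col x)%N -> exists y, row y = i /\ col y = j.
  move=> ix jx; have ij_in : (i, j) \in D.
    by apply: (D_down (row x) (col x)) => //; rewrite -surjective_pairing mem_nth.
  by exists (Ordinal (etrans (index_mem _ _) ij_in)); rewrite /row /col /= nth_index.
have contentE : (content D)%:~R = (\sum_x col x)%:R - (\sum_x row x)%:R :> algC.
  rewrite /content (big_nth (0, 0)%N) big_mkord rmorph_sum !natr_sum -sumrB.
  by apply: eq_bigr => x _; rewrite rmorphB.
split.
  move: (eigenvalue_diagram_content cell_inj cell_down).
  by congr eigenvalue; exact: esym contentE.
have: eigenvalue (transp_adjmx (size D)) ((\sum_x row x)%:R - (\sum_x col x)%:R).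
  apply: eigenvalue_diagram_content => [x y cxy rxy|x i j ix jx]; first exact: cell_inj.
  by have [y [ry cy]] := cell_down x j i jx ix; exists y.
by congr eigenvalue; rewrite intrN -opprB; congr (- _); exact: esym contentE.
Qed.

(** * Frobenius coordinates *)

Definition hook_arm (i a : nat) := [seq (i, i + j)%N | j <- iota 0 a.+1].
Definition hook_leg (i b : nat) := [seq (i + k.+1, i)%N | k <- iota 0 b].

(* [frobenius_cells 0 hs] is the diagram with Frobenius coordinates
   [hs = [:: (a_0, b_0); (a_1, b_1); ...]]: its [k]-th hook has corner [(k, k)],
   arm length [a_k] and leg length [b_k]. *)
Fixpoint frobenius_cells (i : nat) (hs : seq (nat * nat)) : seq (nat * nat) :=
  if hs is h :: t then hook_arm i h.1 ++ hook_leg i h.2 ++ frobenius_cells i.+1 t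
  else [::].

Lemma frobenius_cells_cons i h t :
  frobenius_cells i (h :: t) = hook_arm i h.1 ++ hook_leg i h.2 ++ frobenius_cells i.+1 t.
Proof. by []. Qed.

Definition hook_gt (h h' : nat * nat) := (h'.1 < h.1)%N && (h'.2 < h.2)%N.

Lemma mem_hook_arm i a r c : ((r, c) \in hook_arm i a) = (r == i) && (i <= c <= i + a)%N.
Proof.
apply/mapP/idP => [[j]|/andP[/eqP-> /andP[ic ca]]].
  by rewrite mem_iota => /andP[_ ja] [-> ->]; rewrite eqxx /=; lia.
by exists (c - i)%N; [rewrite mem_iota; lia | congr pair; lia].
Qed.

Lemma mem_hook_leg i b r c : ((r, c) \in hook_leg i b) = (c == i) && (i < r <= i + b)%N.
Proof.
apply/mapP/idP => [[k]|/andP[/eqP-> /andP[ir rb]]].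
  by rewrite mem_iota => /andP[_ kb] [-> ->]; rewrite eqxx /=; lia.
by exists (r - i).-1; [rewrite mem_iota; lia | congr pair; lia].
Qed.

Lemma frobenius_cellsP i hs r c : reflect
  (exists2 k, k < size hs &
     (r == i + k) && (i + k <= c <= i + k + (nth (0, 0) hs k).1) ||
     (c == i + k) && (i + k < r <= i + k + (nth (0, 0) hs k).2))%N
  ((r, c) \in frobenius_cells i hs).
Proof.
elim: hs i => [|[a b] t IH] i; first by rewrite in_nil; constructor => -[].
rewrite frobenius_cells_cons !mem_cat mem_hook_arm mem_hook_leg /=; apply: (iffP idP).
  case/orP => [arm|/orP[leg|/IH[k kt hk]]].
  - by exists 0%N; rewrite //= addn0 arm.
  - by exists 0%N; rewrite //= addn0 leg orbT.
  - by exists k.+1; rewrite //= addnS -addSn.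
case=> -[_|k] /=; first by rewrite addn0 => /orP[]->; rewrite ?orbT.
rewrite ltnS addnS -addSn => kt hk; apply/orP; right; apply/orP; right.
by apply/IH; exists k.
Qed.

Lemma frobenius_cells_ge i hs r c : (r, c) \in frobenius_cells i hs -> (i <= r)%N && (i <= c)%N.
Proof.
by case/frobenius_cellsP=> k _ /orP[] /andP[/eqP-> ?]; lia.
Qed.

Lemma uniq_frobenius_cells i hs : uniq (frobenius_cells i hs).
Proof.
elim: hs i => [|[a b] t IH] i //; rewrite frobenius_cells_cons !cat_uniq IH andbT.
have arm_inj : injective (fun j => (i, i + j)%N) by move=> x y [/addnI].
have leg_inj : injective (fun k => (i + k.+1, i)%N) by move=> x y [/addnI[]].
rewrite !map_inj_uniq ?iota_uniq //=.
apply/andP; split; apply/hasPn => -[r c].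
  rewrite mem_cat mem_hook_arm => /orP[|/frobenius_cells_ge]; last lia.
  by rewrite mem_hook_leg; lia.
by move/frobenius_cells_ge; rewrite mem_hook_leg; lia.
Qed.

Lemma size_frobenius_cells i hs :
  size (frobenius_cells i hs) = (\sum_(h <- hs) (h.1 + h.2).+1)%N.
Proof.
elim: hs i => [|h t IH] i; first by rewrite big_nil.
by rewrite frobenius_cells_cons !size_cat !size_map !size_iota IH big_cons; lia.
Qed.

Lemma content_hook_arm i a : content (hook_arm i a) = 'C(a.+1, 2)%:Z.
Proof.
rewrite /content big_map -triangular_sum -natz natr_sum.
by apply: eq_bigr => j _ /=; rewrite natz PoszD addrAC subrr add0r.
Qed.

Lemma content_hook_leg i b : content (hook_leg i b) = - 'C(b.+1, 2)%:Z.
Proof.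
rewrite /content big_map -triangular_sum big_nat_recl // -natz natr_sum -sumrN /index_iota subn0.
by apply: eq_bigr => k _ /=; rewrite natz PoszD opprD addrA subrr add0r.
Qed.

Lemma content_frobenius_cells i hs :
  content (frobenius_cells i hs) = \sum_(h <- hs) ('C(h.1.+1, 2)%:Z - 'C(h.2.+1, 2)%:Z).
Proof.
elim: hs i => [|h t IH] i; first by rewrite /content !big_nil.
rewrite frobenius_cells_cons /content !big_cat -!/(content _) big_cons.
by rewrite content_hook_arm content_hook_leg IH /= addrA.
Qed.

Lemma hook_gt_trans : transitive hook_gt.
Proof. by move=> h2 h1 h3 /andP[? ?] /andP[? ?]; apply/andP; split; lia. Qed.

Lemma sorted_hook_gt_nth hs i j : sorted hook_gt hs -> (i <= j < size hs)%N ->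
  ((nth (0, 0) hs j).1 + (j - i) <= (nth (0, 0) hs i).1)%N /\
  ((nth (0, 0) hs j).2 + (j - i) <= (nth (0, 0) hs i).2)%N.
Proof.
move=> hs_sorted /andP[]; elim: j => [|j IH] ij js.
  by move: ij; rewrite leqn0 => /eqP->; split; lia.
have [->|ij'] := eqVneq i j.+1; first by rewrite subnn !addn0.
have ij2 : (i <= j)%N by rewrite -ltnS ltn_neqAle ij' ij.
have /andP[gt1 gt2] : hook_gt (nth (0, 0)%N hs j) (nth (0, 0)%N hs j.+1).
  by apply: (sorted_ltn_nth hook_gt_trans) => //; rewrite ?inE /=; lia.
have [] := IH ij2 (ltnW js); lia.
Qed.

(* A cell [(r', c')] with [r' <= c'] lies on the arm of the [r']-th hook,
   otherwise on the leg of the [c']-th hook. *)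
Lemma down_closed_frobenius_cells hs : sorted hook_gt hs -> down_closed (frobenius_cells 0 hs).
Proof.
move=> hs_sorted r c r' c' /frobenius_cellsP[k ks hk] rr' cc'; apply/frobenius_cellsP.
have [r'c'|c'r'] := leqP r' c'.
  have r'k : (r' <= k < size hs)%N by lia.
  by exists r'; have [] := sorted_hook_gt_nth hs_sorted r'k; lia.
have c'k : (c' <= k < size hs)%N by lia.
by exists c'; have [] := sorted_hook_gt_nth hs_sorted c'k; lia.
Qed.

Lemma binS2 m : 'C(m.+1, 2) = ('C(m, 2) + m)%N.
Proof. by rewrite binS bin1. Qed.

Ltac hooks_check :=
  split; [rewrite /= /hook_gt /= | rewrite !big_cons big_nil; cbn [fst snd] ..];
  rewrite ?binS2 ?bin0n; lia.

(* The hook [(a, b)] has size [a + b + 1] and content ['C(a + 1, 2) - 'C(b + 1, 2)]: a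
   long symmetric first hook adjusts the size without contributing to the content,
   which comes from one or two short hooks. *)
Lemma exists_frobenius_coordinates (n k : nat) : (19 <= n)%N -> (2 * k + 4 <= n)%N -> exists hs,
  [/\ sorted hook_gt hs, (\sum_(h <- hs) (h.1 + h.2).+1)%N = n &
      \sum_(h <- hs) ('C(h.1.+1, 2)%:Z - 'C(h.2.+1, 2)%:Z) = k].
Proof.
rewrite -(odd_double_half n) -(odd_double_half k); move: n./2 k./2 => p q.
case: (odd n); case: (odd k) => n19 kn.
- case: q kn => [|[|q]] kn.
  + by exists [:: (p - 1, p - 1); (1, 0)]%N; hooks_check.
  + by exists [:: (p - 3, p - 3); (2, 1); (1, 0)]%N; hooks_check.
  + by exists [:: (p - q - 3, p - q - 3); (q.+3, q.+1); (0, 0)]%N; hooks_check.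
- case: q kn => [|[|[|[|q]]]] kn.
  + by exists [:: (p, p)]%N; hooks_check.
  + by exists [:: (p - 2, p - 2); (2, 1)]%N; hooks_check.
  + by exists [:: (p - 4, p - 4); (3, 2); (1, 0)]%N; hooks_check.
  + by exists [:: (p - 2, p - 2); (3, 0)]%N; hooks_check.
  + by exists [:: (p - q - 4, p - q - 4); (q.+3, q.+1); (2, 0)]%N; hooks_check.
- case: q kn => [|q] kn.
  + by exists [:: (p - 4, p - 4); (2, 2); (1, 0)]%N; hooks_check.
  + by exists [:: (p - q - 2, p - q - 2); (q.+2, q)]%N; hooks_check.
- case: q kn => [|[|[|q]]] kn.
  + by exists [:: (p - 1, p - 1); (0, 0)]%N; hooks_check.
  + by exists [:: (p - 3, p - 3); (2, 1); (0, 0)]%N; hooks_check.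
  + by exists [:: (p - 5, p - 5); (4, 3); (0, 0)]%N; hooks_check.
  + by exists [:: (p - q - 4, p - q - 4); (q.+3, q.+1); (1, 0)]%N; hooks_check.
Qed.

Lemma exists_diagram_content (n k : nat) : (19 <= n)%N -> (2 * k + 4 <= n)%N ->
  exists D, [/\ uniq D, down_closed D, size D = n & content D = k].
Proof.
move=> n19 kn; have [hs [hs_sorted hs_size hs_content]] := exists_frobenius_coordinates n19 kn.
exists (frobenius_cells 0 hs); split.
- exact: uniq_frobenius_cells.
- exact: down_closed_frobenius_cells.
- by rewrite size_frobenius_cells.
- by rewrite content_frobenius_cells.
Qed.

Lemma abs_int_bound (n : nat) (m : int) :
  - ((n%:R - 4) / 2) <= (m%:~R : algC) <= (n%:R - 4) / 2 -> (2 * `|m| + 4 <= n)%N.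
Proof.
move=> m_in; have : `|m%:~R| <= ((n%:R - 4) / 2 : algC) by rewrite real_ler_norml ?realz.
rewrite -intr_norm -abszE ler_pdivlMr ?ltr0n // lerBrDr.
by rewrite -[_ * 2]natrM -natrD ler_nat mulnC.
Qed.

Theorem theorem3 (n : nat) (hn : (19 <= n)%N) (m : int) :
  - ((n%:R - 4) / 2) <= (m%:~R : algC) <= (n%:R - 4) / 2 ->
  eigenvalue (transp_adjmx n) (m%:~R : algC).
Proof.
move=> /abs_int_bound m_bound.
have [D [D_uniq D_down <- D_content]] := exists_diagram_content hn m_bound.
have [eig_pos eig_neg] := eigenvalue_content D_uniq D_down.
have [/gez0_abs m_abs|/ltz0_abs m_abs] := lerP 0 m.
  by move: eig_pos; rewrite D_content m_abs.
by move: eig_neg; rewrite D_content m_abs opprK.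
Qed.
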